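(* Let $S>0$, $I\ge1$, $J\in\{1,\dots,I\}$, $N_1,\dots,N_I$ positive integers and $\theta_1>\dots>\theta_I>0$. Consider the partial price differentiation problem: maximize $\sum_{i=1}^I n_ip_is_i$ over prices $p^1,\dots,p^J>0$, assignments $a_i^j\in\{0,1\}$ with $\sum_{j=1}^J a_i^j=1$ for each $i$, and $n_i\in\{0,\dots,N_i\}$, subject to $p_i=\sum_{j=1}^J a_i^jp^j$, $s_i=(\theta_i/p_i-1)^+$ for each $i$, and $\sum_{i=1}^I n_is_i\le S$. Call group $i$ effective in a feasible solution if $n_is_i>0$. Then at any optimal solution of this problem, the set of effective groups is $\{1,2,\dots,K\}$ for some integer $K$.
   Context: Group $i$ consists of $N_i$ users each with utility $\theta_i\ln(1+s)$; a user facing unit price $p$ demands $(\theta_i/p-1)^+$, where $(x)^+=\max(x,0)$. The service provider has total resource $S$ and may use at most $J$ distinct unit prices, each group being charged one of them. *)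

From mathcomp Require Import all_boot all_order all_algebra.
Set Implicit Arguments. Unset Strict Implicit. Unset Printing Implicit Defensive.
Import Order.TTheory GRing.Theory Num.Theory.
Local Open Scope ring_scope.

Definition pospart (R : realFieldType) (x : R) : R := Num.max x 0.

Definition grp_price (R : realFieldType) (I J : nat)
  (p : 'I_J -> R) (a : 'I_I -> 'I_J -> nat) (i : 'I_I) : R :=
  \sum_(j < J) (a i j)%:R * p j.

Definition grp_demand (R : realFieldType) (I J : nat) (theta : 'I_I -> R)
  (p : 'I_J -> R) (a : 'I_I -> 'I_J -> nat) (i : 'I_I) : R :=
  pospart (theta i / grp_price p a i - 1).

Definition revenue (R : realFieldType) (I J : nat) (theta : 'I_I -> R)
  (p : 'I_J -> R) (a : 'I_I -> 'I_J -> nat) (n : 'I_I -> nat) : R :=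
  \sum_(i < I) (n i)%:R * grp_price p a i * grp_demand theta p a i.

Definition feasible (R : realFieldType) (I J : nat) (S : R) (N : 'I_I -> nat)
  (theta : 'I_I -> R) (p : 'I_J -> R) (a : 'I_I -> 'I_J -> nat)
  (n : 'I_I -> nat) : Prop :=
  (forall j, 0 < p j) /\
  (forall i j, (a i j <= 1)%N) /\
  (forall i, (\sum_(j < J) a i j)%N = 1%N) /\
  (forall i, (n i <= N i)%N) /\
  \sum_(i < I) (n i)%:R * grp_demand theta p a i <= S.

Definition optimal (R : realFieldType) (I J : nat) (S : R) (N : 'I_I -> nat)
  (theta : 'I_I -> R) (p : 'I_J -> R) (a : 'I_I -> 'I_J -> nat)
  (n : 'I_I -> nat) : Prop :=
  feasible S N theta p a n /\
  forall (p' : 'I_J -> R) (a' : 'I_I -> 'I_J -> nat) (n' : 'I_I -> nat), feasible S N theta p' a' n' ->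
    revenue theta p' a' n' <= revenue theta p a n.

Definition effective (R : realFieldType) (I J : nat) (theta : 'I_I -> R)
  (p : 'I_J -> R) (a : 'I_I -> 'I_J -> nat) (n : 'I_I -> nat) (i : 'I_I) : Prop :=
  0 < (n i)%:R * grp_demand theta p a i.

From mathcomp Require Import all_boot all_order all_algebra.
From mathcomp Require Import ring lra.
Import Order.TTheory GRing.Theory Num.Theory.
Set Implicit Arguments. Unset Strict Implicit.
Local Open Scope ring_scope.

(* Suppose group i is idle while a group k > i, hence theta_k < theta_i, is
   effective, say in price class j.  Move one user of k into group i, placed in
   class j: since theta_i > theta_k, this user demands more than the one removed,
   so class j now overuses the resource.  Raise the price of class j until its
   usage is back to its old value.  The revenue of a class is its price times its
   usage, so the revenue strictly grows while the total usage is unchanged,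
   contradicting optimality.  Hence effective groups are closed downwards.

   As a function of the reciprocal price, the usage of a class is a finite sum
   of hinges w_l (theta_l u - 1)^+; over an arbitrary ordered field the required
   intermediate value is found by walking down the breakpoints 1 / theta_l, on
   each gap of which the sum is affine. *)

Section PosPart.
Variable R : realFieldType.
Implicit Types x y : R.

Lemma pospart_id x : 0 <= x -> pospart x = x.
Proof. by move=> x_ge0; rewrite /pospart max_l. Qed.

Lemma pospart_eq0 x : x <= 0 -> pospart x = 0.
Proof. by move=> x_le0; rewrite /pospart max_r. Qed.

Lemma pospart_ge0 x : 0 <= pospart x.
Proof. by rewrite /pospart le_max lexx orbT. Qed.

Lemma pospart_gt0 x : (0 < pospart x) = (0 < x).
Proof. by rewrite /pospart lt_max ltxx orbF. Qed.

Lemma pospart_lt x y : 0 < pospart x -> x < y -> pospart x < pospart y.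
Proof.
rewrite pospart_gt0 => x_gt0 xy.
by rewrite !pospart_id ?ltW // (lt_trans x_gt0 xy).
Qed.

End PosPart.

Section Sums.
Variables (R : numDomainType) (n : nat).
Implicit Types F G : 'I_n -> R.

Lemma sumr_update2 F G i k : i != k -> (forall l, l != i -> l != k -> F l = G l) ->
  \sum_(l < n) F l = \sum_(l < n) G l + (F i - G i) + (F k - G k).
Proof.
move=> ik FG; rewrite -addrA -[LHS](subrK (\sum_l G l)) -sumrB addrC; congr (_ + _).
rewrite (bigD1 i) // (bigD1 k) 1?eq_sym //= big1 ?addr0 // => l /andP[li lk].
by rewrite FG ?subrr.
Qed.

Lemma sumr_ge_pair F i k : i != k -> (forall l, 0 <= F l) -> F i + F k <= \sum_(l < n) F l.
Proof.
move=> ik F_ge0; rewrite (bigD1 i) // (bigD1 k) 1?eq_sym //= addrA lerDl.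
exact: sumr_ge0.
Qed.

End Sums.

Lemma natr_pred (R : pzRingType) m : (0 < m)%N -> (m.-1)%:R = m%:R - 1 :> R.
Proof. by move=> m_gt0; rewrite -{2}(prednK m_gt0) -natr1 addrK. Qed.

Section HingeSum.
Variables (R : realFieldType) (n : nat) (w th : 'I_n -> R).
Hypothesis th_gt0 : forall l, 0 < th l.

Definition hinge_sum (u : R) : R := \sum_(l < n) w l * pospart (th l * u - 1).

Definition hinge_active (u : R) : pred 'I_n := [pred l | 1 < th l * u].

Lemma hinge_sum0 : hinge_sum 0 = 0.
Proof.
by rewrite /hinge_sum big1 // => l _; rewrite mulr0 sub0r pospart_eq0 ?mulr0 ?lerN10.
Qed.

Lemma hinge_sum_inhinge_active u : hinge_active u =1 pred0 -> hinge_sum u = 0.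
Proof.
move=> none; rewrite /hinge_sum big1 // => l _.
by rewrite pospart_eq0 ?mulr0 // subr_le0 leNgt; move/negbT: (none l).
Qed.

Lemma hinge_sum_affine b u0 u :
  (forall l, hinge_active u0 l -> 1 <= th l * b) -> b <= u <= u0 ->
  hinge_sum u = hinge_sum b + (u - b) * \sum_(l | hinge_active u0 l) w l * th l.
Proof.
move=> act_b /andP[bu uu0]; rewrite big_mkcond mulr_sumr /hinge_sum -big_split.
apply: eq_bigr => l _ /=; have thl := th_gt0 l; case: ifP => [act_l | /negbT].
  have thlu : 1 <= th l * u by apply: le_trans (act_b l act_l) (ler_wpM2l (ltW thl) bu).
  by rewrite !pospart_id ?subr_ge0 ?act_b //; ring.
rewrite /hinge_active -leNgt => th_u0.
have le_u0 v : v <= u0 -> pospart (th l * v - 1) = 0.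
  move=> vu0; rewrite pospart_eq0 // subr_le0.
  by apply: (le_trans _ th_u0); rewrite ler_pM2l.
by rewrite !le_u0 ?(le_trans bu uu0) // !mulr0 addr0.
Qed.

Lemma hinge_active_next_breakpoint u0 m0 :
  hinge_active u0 m0 -> exists b, [/\ 0 < b, b < u0,
    forall l, hinge_active u0 l -> 1 <= th l * b & (#|hinge_active b| < #|hinge_active u0|)%N].
Proof.
move=> act_m0; have [m act_m min_m] := arg_minP th act_m0.
have thm := th_gt0 m.
have b_u0 : (th m)^-1 < u0 by rewrite -[_^-1]mulr1 ltr_pdivrMl.
exists (th m)^-1; split => // [|l act_l|]; first by rewrite invr_gt0.
  by rewrite ler_pdivlMr // mul1r min_m.
apply: proper_card; apply/properP; split.
  apply/subsetP => l; rewrite !inE => /lt_le_trans; apply.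
  by rewrite ler_pM2l ?th_gt0 ?ltW.
by exists m; rewrite !inE /hinge_active ?act_m // mulfV ?gt_eqF ?ltxx.
Qed.

Lemma hinge_sum_ivt u0 c : 0 <= u0 -> 0 <= c <= hinge_sum u0 ->
  exists2 u, 0 <= u <= u0 & hinge_sum u = c.
Proof.
have [k] := ubnP #|hinge_active u0|; elim: k u0 c => // k IH u0 c card_u0.
move=> u0_ge0 /andP[c_ge0 c_le].
case: (pickP (hinge_active u0)) => [m act_m | none]; last first.
  exists u0; rewrite ?lexx ?u0_ge0 // (hinge_sum_inhinge_active none).
  by apply/le_anti; rewrite c_ge0 -(hinge_sum_inhinge_active none).
have [b [b_gt0 b_u0 act_b card_b]] := hinge_active_next_breakpoint act_m.
set A := \sum_(l | hinge_active u0 l) w l * th l.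
have affine u : b <= u <= u0 -> hinge_sum u = hinge_sum b + (u - b) * A.
  exact: hinge_sum_affine.
have [c_le_b | b_lt_c] := lerP c (hinge_sum b).
  have card_b' : (#|hinge_active b| < k)%N by apply: (leq_trans card_b); rewrite -ltnS.
  have [u /andP[u_ge0 u_b] <-] := IH b c card_b' (ltW b_gt0) (introT andP (conj c_ge0 c_le_b)).
  by exists u; rewrite // u_ge0 (le_trans u_b (ltW b_u0)).
have G_u0 : hinge_sum u0 = hinge_sum b + (u0 - b) * A.
  by apply: affine; rewrite (ltW b_u0) lexx.
have A_gt0 : 0 < A.
  have := lt_le_trans b_lt_c c_le; rewrite G_u0 ltrDl.
  by rewrite pmulr_rgt0 // subr_gt0.
set u := b + (c - hinge_sum b) / A.
have b_le_u : b <= u by rewrite lerDl divr_ge0 ?subr_ge0 ?ltW.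
have u_le_u0 : u <= u0.
  by rewrite -lerBrDl ler_pdivrMr // lerBlDl -G_u0.
exists u; first by rewrite (le_trans (ltW b_gt0) b_le_u).
by rewrite affine ?b_le_u // addrAC subrr add0r divfK ?gt_eqF // addrC subrK.
Qed.

Lemma hinge_sum_ivt_open u0 c : 0 <= u0 -> 0 < c < hinge_sum u0 ->
  exists2 u, 0 < u < u0 & hinge_sum u = c.
Proof.
move=> u0_ge0 /andP[c_gt0 c_lt].
have [|u /andP[u_ge0 u_le] Gu] := hinge_sum_ivt (c := c) u0_ge0; first by rewrite !ltW.
exists u => //; rewrite !lt_def u_ge0 u_le !andbT.
apply/andP; split; apply/eqP => eq_u.
  by move: c_gt0; rewrite -Gu eq_u hinge_sum0 ltxx.
by move: c_lt; rewrite -Gu -eq_u ltxx.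
Qed.

End HingeSum.

Section Pricing.
Variables (R : realFieldType) (I J : nat) (theta : 'I_I -> R).
Implicit Types (p : 'I_J -> R) (a : 'I_I -> 'I_J -> nat) (n : 'I_I -> nat).

Definition load p a n : R := \sum_(i < I) (n i)%:R * grp_demand theta p a i.

Lemma exists_assigned_class a l :
  (forall j, (a l j <= 1)%N) -> (\sum_(j < J) a l j)%N = 1%N -> exists j0, a l j0 = 1%N.
Proof.
move=> a_le1 a_row; have [j /negPf anz | none] := pickP (fun j => a l j != 0%N).
  by exists j; move: (a_le1 j) anz; case: (a l j) => [|[|]].
by move: a_row; rewrite big1 // => j _; apply/eqP; rewrite -[_ == _]negbK none.
Qed.

Lemma grp_price_class p a l j0 : a l j0 = 1%N -> (\sum_(j < J) a l j)%N = 1%N ->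
  grp_price p a l = p j0.
Proof.
move=> alj0; rewrite (bigD1 j0) //= alj0 add1n => /eqP; rewrite eqSS sum_nat_eq0.
move=> /forallP a0; rewrite /grp_price (bigD1 j0) //= alj0 mul1r big1 ?addr0 // => j j0j.
by have := a0 j; rewrite j0j /= => /eqP ->; rewrite mul0r.
Qed.

Definition set_price p j0 q : 'I_J -> R := fun j => if j == j0 then q else p j.

Definition class_weight a n j0 : 'I_I -> R := fun l => (a l j0 * n l)%:R.

Section SetPrice.
Variables (p : 'I_J -> R) (a : 'I_I -> 'I_J -> nat) (n : 'I_I -> nat) (j0 : 'I_J).
Hypotheses (a_le1 : forall l, (a l j0 <= 1)%N)
  (a_row : forall l, (\sum_(j < J) a l j)%N = 1%N).

Lemma grp_term_set_price q (f : R -> R) l :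
  (n l)%:R * f (grp_price (set_price p j0 q) a l) =
  (n l)%:R * f (grp_price p a l) - class_weight a n j0 l * f (p j0)
    + class_weight a n j0 l * f q.
Proof.
rewrite /class_weight; have := a_le1 l; case alj0: (a l j0) => [|[|//]] _.
  suff -> : grp_price (set_price p j0 q) a l = grp_price p a l.
    by rewrite mul0n !mul0r subr0 addr0.
  by apply: eq_bigr => j _; rewrite /set_price; case: eqP => [->|]; rewrite ?alj0 ?mul0r.
rewrite !(grp_price_class _ alj0) // /set_price eqxx mul1n.
by rewrite subrr add0r.
Qed.

Lemma load_set_price q :
  load (set_price p j0 q) a n = load p a n
    - hinge_sum (class_weight a n j0) theta (p j0)^-1
    + hinge_sum (class_weight a n j0) theta q^-1.
Proof.
rewrite /load /hinge_sum -sumrB -big_split; apply: eq_bigr => l _ /=.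
exact: (grp_term_set_price q (fun x => pospart (theta l / x - 1))).
Qed.

Lemma revenue_set_price q :
  revenue theta (set_price p j0 q) a n = revenue theta p a n
    - p j0 * hinge_sum (class_weight a n j0) theta (p j0)^-1
    + q * hinge_sum (class_weight a n j0) theta q^-1.
Proof.
rewrite /revenue /hinge_sum !mulr_sumr -sumrB -big_split; apply: eq_bigr => l _ /=.
rewrite /grp_demand -!mulrA.
rewrite (grp_term_set_price q (fun x => x * pospart (theta l / x - 1))) /=.
by ring.
Qed.

Lemma reprice_class c : (forall l, 0 < theta l) -> 0 < p j0 ->
  0 < c < hinge_sum (class_weight a n j0) theta (p j0)^-1 ->
  exists2 q, p j0 < q &
    load (set_price p j0 q) a n = load p a n
      - hinge_sum (class_weight a n j0) theta (p j0)^-1 + c /\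
    revenue theta (set_price p j0 q) a n = revenue theta p a n
      - p j0 * hinge_sum (class_weight a n j0) theta (p j0)^-1 + q * c.
Proof.
move=> theta_gt0 pj0_gt0 c_bounds.
have [|u /andP[u_gt0 u_lt] Gu] := hinge_sum_ivt_open theta_gt0 _ c_bounds.
  by rewrite invr_ge0 ltW.
exists u^-1; first by rewrite -[p j0]invrK ltf_pV2 ?posrE ?invr_gt0.
by rewrite load_set_price revenue_set_price invrK Gu.
Qed.

End SetPrice.

Definition move_assignment a (i k : 'I_I) : 'I_I -> 'I_J -> nat :=
  fun l => if l == i then a k else a l.

Definition move_user n (i k : 'I_I) : 'I_I -> nat :=
  fun l => if l == i then 1%N else if l == k then (n k).-1 else n l.

Section MoveUser.
Variables (p : 'I_J -> R) (a : 'I_I -> 'I_J -> nat) (n : 'I_I -> nat) (i k : 'I_I).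
Hypotheses (ik : i != k) (idle_i : (n i)%:R * grp_demand theta p a i = 0)
  (n_k_gt0 : (0 < n k)%N).

Let a' := move_assignment a i k.
Let n' := move_user n i k.
Let s_i := pospart (theta i / grp_price p a k - 1).
Let s_k := grp_demand theta p a k.

Lemma grp_price_move_self : grp_price p a' i = grp_price p a k.
Proof. by rewrite /grp_price /a' /move_assignment eqxx. Qed.

Lemma grp_demand_move_self : grp_demand theta p a' i = s_i.
Proof. by rewrite /grp_demand grp_price_move_self. Qed.

Lemma grp_demand_move_other l : l != i -> grp_demand theta p a' l = grp_demand theta p a l.
Proof. by move=> li; rewrite /grp_demand /grp_price /a' /move_assignment (negPf li). Qed.

Lemma grp_price_move_other l : l != i -> grp_price p a' l = grp_price p a l.
Proof. by move=> li; rewrite /grp_price /a' /move_assignment (negPf li). Qed.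

Lemma move_user_self : n' i = 1%N.
Proof. by rewrite /n' /move_user eqxx. Qed.

Lemma move_user_k : n' k = (n k).-1.
Proof. by rewrite /n' /move_user eq_sym (negPf ik) eqxx. Qed.

Lemma move_user_other l : l != i -> l != k -> n' l = n l.
Proof. by move=> li lk; rewrite /n' /move_user (negPf li) (negPf lk). Qed.

Lemma load_move_user : load p a' n' = load p a n + (s_i - s_k).
Proof.
rewrite /load (sumr_update2 (G := fun l => (n l)%:R * grp_demand theta p a l) ik).
  rewrite idle_i grp_demand_move_self grp_demand_move_other 1?eq_sym //.
  by rewrite move_user_self move_user_k (natr_pred _ n_k_gt0) /s_k; ring.
by move=> l li lk; rewrite move_user_other ?grp_demand_move_other.
Qed.

Lemma revenue_move_user :
  revenue theta p a' n' = revenue theta p a n + grp_price p a k * (s_i - s_k).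
Proof.
have idle_rev : (n i)%:R * grp_price p a i * grp_demand theta p a i = 0.
  by rewrite mulrAC idle_i mul0r.
rewrite /revenue (sumr_update2
  (G := fun l => (n l)%:R * grp_price p a l * grp_demand theta p a l) ik).
  rewrite idle_rev grp_demand_move_self grp_demand_move_other 1?eq_sym //.
  rewrite grp_price_move_self grp_price_move_other 1?eq_sym //.
  by rewrite move_user_self move_user_k (natr_pred _ n_k_gt0) /s_k; ring.
by move=> l li lk; rewrite move_user_other ?grp_demand_move_other ?grp_price_move_other.
Qed.

Lemma class_load_move_user j0 :
  a k j0 = 1%N -> (\sum_(j < J) a k j)%N = 1%N -> 0 < s_k ->
  s_i - s_k < hinge_sum (class_weight a' n' j0) theta (p j0)^-1.
Proof.
move=> akj0 a_row s_k_gt0; have price_k := grp_price_class p akj0 a_row.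
set F := fun l => class_weight a' n' j0 l * pospart (theta l * (p j0)^-1 - 1).
rewrite /hinge_sum; apply: (lt_le_trans _ (sumr_ge_pair (F := F) ik _)); last first.
  by move=> l; rewrite mulr_ge0 ?ler0n ?pospart_ge0.
rewrite /F /class_weight /a' /move_assignment eqxx eq_sym (negPf ik) akj0.
rewrite move_user_self move_user_k !mul1n (natr_pred _ n_k_gt0) mul1r -price_k -/s_i.
rewrite -/(grp_demand theta p a k) -/s_k ltrD2l.
have : 0 < (n k)%:R * s_k by rewrite mulr_gt0 ?ltr0n.
lra.
Qed.

End MoveUser.

Lemma revenue_improvable S N p a n i k :
  (forall l, (0 < N l)%N) -> (forall l, 0 < theta l) -> feasible S N theta p a n ->
  theta k < theta i -> ~ effective theta p a n i -> effective theta p a n k ->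
  exists p' a' n', feasible S N theta p' a' n' /\ revenue theta p a n < revenue theta p' a' n'.
Proof.
move=> N_gt0 theta_gt0 [p_gt0 [a_le1 [a_row [n_le load_le]]]] theta_ki not_eff_i eff_k.
have ik : i != k by apply: contraTneq theta_ki => ->; rewrite ltxx.
have [j0 akj0] := exists_assigned_class (a_le1 k) (a_row k).
have price_k := grp_price_class p akj0 (a_row k).
set p0 := p j0 in price_k *; have p0_gt0 : 0 < p0 := p_gt0 j0.
have n_k_gt0 : (0 < n k)%N.
  by move: eff_k; rewrite /effective; case: (n k) => //; rewrite mul0r ltxx.
have s_k_gt0 : 0 < grp_demand theta p a k by move: eff_k; rewrite /effective pmulr_rgt0 ?ltr0n.
have idle_i : (n i)%:R * grp_demand theta p a i = 0.
  by apply/le_anti; rewrite mulr_ge0 ?ler0n ?pospart_ge0 // leNgt andbT; apply/negP.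
set s_i := pospart (theta i / p0 - 1); set s_k := grp_demand theta p a k in s_k_gt0 *.
have s_ki : s_k < s_i.
  rewrite /s_k /grp_demand price_k; apply: pospart_lt; first by rewrite -price_k.
  by rewrite ltrD2r ltr_pM2r ?invr_gt0.
set a' := move_assignment a i k; set n' := move_user n i k.
set G := hinge_sum (class_weight a' n' j0) theta.
have class_gt0 : 0 < G p0^-1 - (s_i - s_k).
  have := class_load_move_user ik n_k_gt0 akj0 (a_row k) s_k_gt0.
  by rewrite subr_gt0 price_k.
have a'_le1 l j : (a' l j <= 1)%N by rewrite /a' /move_assignment; case: eqP.
have a'_row l : (\sum_(j < J) a' l j)%N = 1%N by rewrite /a' /move_assignment; case: eqP.
have class_lt : G p0^-1 - (s_i - s_k) < G p0^-1 by rewrite gtrBl subr_gt0.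
have [q p0_q [load' rev']] := reprice_class (p := p) (a'_le1^~ j0) a'_row theta_gt0
  p0_gt0 (introT andP (conj class_gt0 class_lt)).
rewrite (load_move_user (p := p) ik idle_i n_k_gt0) in load'.
rewrite (revenue_move_user (p := p) ik idle_i n_k_gt0) in rev'.
rewrite price_k -/p0 -/G -/s_k -/s_i in load' rev'.
exists (set_price p j0 q), a', n'; split; last first.
  have gain : 0 < (q - p0) * (G p0^-1 - (s_i - s_k)) by rewrite mulr_gt0 // subr_gt0.
  rewrite rev'; lra.
do 4?split=> //.
- by move=> j; rewrite /set_price; case: eqP => _ //; apply: lt_trans p0_q.
- move=> l; rewrite /n' /move_user; case: eqP => _; first exact: N_gt0.
  by case: eqP => [->|_]; [apply: leq_trans (leq_pred _) (n_le k) | apply: n_le].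
change (load (set_price p j0 q) a' n' <= S); rewrite load'.
by move: load_le; rewrite -/(load p a n); lra.
Qed.

End Pricing.

Lemma downward_closed_prefix n (P : pred 'I_n) :
  (forall i k : 'I_n, (i < k)%N -> P k -> P i) -> exists K, forall i : 'I_n, P i <-> (i < K)%N.
Proof.
move=> closed; exists (\max_(l | P l) l.+1)%N => i; split => [Pi | ].
  exact: (leq_bigmax_cond (F := fun l : 'I_n => l.+1)).
apply: contraTT => notPi; rewrite -leqNgt; apply/bigmax_leqP => l Pl.
rewrite ltnNge; apply: contra notPi; rewrite leq_eqVlt => /orP[/eqP/val_inj -> // | il].
exact: closed il Pl.
Qed.

Lemma optimal_effective_downward_closed (R : realFieldType) (I J : nat) (S : R) (N : 'I_I -> nat)
  (theta : 'I_I -> R) (p : 'I_J -> R) (a : 'I_I -> 'I_J -> nat) (n : 'I_I -> nat) :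
  (forall l, (0 < N l)%N) -> (forall l, 0 < theta l) ->
  (forall i k : 'I_I, (i < k)%N -> theta k < theta i) -> optimal S N theta p a n ->
  forall i k : 'I_I, (i < k)%N -> effective theta p a n k -> effective theta p a n i.
Proof.
move=> N_gt0 theta_gt0 theta_dec [feas best] i k ik eff_k; apply: contraT => /negP not_eff_i.
have [p' [a' [n' [feas' better]]]] :=
  revenue_improvable N_gt0 theta_gt0 feas (theta_dec _ _ ik) not_eff_i eff_k.
by have := best _ _ _ feas'; rewrite leNgt better.
Qed.

Theorem lemma2 (R : realFieldType) (I J : nat) (S : R) (N : 'I_I -> nat)
  (theta : 'I_I -> R)
  (hS : 0 < S) (hI : (1 <= I)%N) (hJ1 : (1 <= J)%N) (hJI : (J <= I)%N)
  (hN : forall i, (0 < N i)%N)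
  (htheta_dec : forall i k : 'I_I, (i < k)%N -> theta k < theta i)
  (htheta_pos : forall i, 0 < theta i)
  (p : 'I_J -> R) (a : 'I_I -> 'I_J -> nat) (n : 'I_I -> nat)
  (hopt : optimal S N theta p a n) :
  exists K : nat, forall i : 'I_I, effective theta p a n i <-> (i < K)%N.
Proof.
apply: (downward_closed_prefix (P := fun i => 0 < (n i)%:R * grp_demand theta p a i)).
exact: optimal_effective_downward_closed hN htheta_pos htheta_dec hopt.
Qed.
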